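(* Let $\Gamma=\mathsf{PSL}_2(\mathbb{Z})=\langle U,S\mid U^3,S^2\rangle$, where $U$ has order $3$ and $S$ has order $2$. For integers $n,m\ge 0$ let $q(n,m)$ be the number of words in the alphabet $\{U,S\}$ containing exactly $n$ letters $U$ and $m$ letters $S$ which are equal to the identity in $\Gamma$ (the empty word counts, so $q(0,0)=1$). Let $$Q(x,y)=\sum_{n,m\ge 0}q(n,m)x^ny^m,\qquad T(x)=Q(x,x)=\sum_{n\ge0}t(n)x^n,$$ where $t(n)$ is the number of words of length $n$ in $\{U,S\}$ equal to the identity in $\Gamma$. Then $Q(x,y)$ is an algebraic function of degree $3$ over $\mathbb{Q}(x,y)$ satisfying $$(y^6-x^6+6y^2x^3-3y^4+2x^3+3y^2-1)Q^3+(x^3y^2-y^4+x^3+2y^2-1)Q^2+(x^3-y^2+1)Q+1=0.$$ In particular, $T(x)$ is an algebraic function of degree $3$ over $\mathbb{Q}(x)$ satisfying $$(6x^5-3x^4+2x^3+3x^2-1)T^3+(x^5-x^4+x^3+2x^2-1)T^2+(x^3-x^2+1)T+1=0.$$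
   Context: Words are finite sequences over the two-letter alphabet $\{U,S\}$, interpreted as products of the corresponding group elements in $\Gamma$. The generating functions are formal power series (convergent for small $|x|,|y|$). *)

From HB Require Import structures.
From mathcomp Require Import all_boot all_order all_algebra.
Set Implicit Arguments. Unset Strict Implicit. Unset Printing Implicit Defensive.
Import Order.TTheory GRing.Theory Num.Theory.
Local Open Scope ring_scope.

(* Words over {U,S}: a letter is a bool, [true] = U, [false] = S. *)

(* Gamma = PSL_2(Z), realised as SL_2(Z) modulo {+I,-I}.
   Standard generators: S = [[0,-1],[1,0]] (order 2 in PSL_2(Z)),
   U = S*T = [[0,-1],[1,1]] (order 3 in PSL_2(Z)). *)
Definition mx2 (a b c d : int) : 'M[int]_2 :=
  \matrix_(i < 2, j < 2)
    (if val i == 0%N then (if val j == 0%N then a else b)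
     else (if val j == 0%N then c else d)).

Definition matU : 'M[int]_2 := mx2 0 (-1) 1 1.
Definition matS : 'M[int]_2 := mx2 0 (-1) 1 0.

Definition letter_mx (b : bool) : 'M[int]_2 := if b then matU else matS.

Definition word_mx (w : seq bool) : 'M[int]_2 :=
  foldr (fun b M => letter_mx b *m M) 1%:M w.

Definition trivial_word (w : seq bool) : bool :=
  (word_mx w == 1%:M) || (word_mx w == - 1%:M).

Definition q (n m : nat) : nat :=
  #|[pred w : (n + m).-tuple bool | (count id w == n) && trivial_word w]|.

Definition t (n : nat) : nat :=
  #|[pred w : n.-tuple bool | trivial_word w]|.

(* Formal power series in two variables x,y over Q: coefficient of x^n y^m *)
Definition bser := nat -> nat -> rat.
Definition bzero : bser := fun _ _ => 0.
Definition badd (f g : bser) : bser := fun n m => f n m + g n m.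
Definition bmul (f g : bser) : bser := fun n m =>
  \sum_(i < n.+1) \sum_(j < m.+1) f i j * g (n - i)%N (m - j)%N.
(* polynomials in Q[x,y] as {poly {poly rat}}: outer variable y, inner x *)
Definition bpoly (p : {poly {poly rat}}) : bser := fun n m => (p`_m)`_n.
Definition px : {poly {poly rat}} := ('X : {poly rat})%:P.
Definition py : {poly {poly rat}} := 'X.

Definition user := nat -> rat.
Definition uzero : user := fun _ => 0.
Definition uadd (f g : user) : user := fun n => f n + g n.
Definition umul (f g : user) : user := fun n =>
  \sum_(i < n.+1) f i * g (n - i)%N.
Definition upoly (p : {poly rat}) : user := fun n => p`_n.

Definition Qser : bser := fun n m => (q n m)%:R.
Definition Tser : user := fun n => (t n)%:R.

Definition cQ3 : {poly {poly rat}} :=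
  py^+6 - px^+6 + 6%:R * py^+2 * px^+3 - 3%:R * py^+4 + 2%:R * px^+3 + 3%:R * py^+2 - 1.
Definition cQ2 : {poly {poly rat}} :=
  px^+3 * py^+2 - py^+4 + px^+3 + 2%:R * py^+2 - 1.
Definition cQ1 : {poly {poly rat}} := px^+3 - py^+2 + 1.
Definition cQ0 : {poly {poly rat}} := 1.

Definition cT3 : {poly rat} := 6%:R * 'X^5 - 3%:R * 'X^4 + 2%:R * 'X^3 + 3%:R * 'X^2 - 1.
Definition cT2 : {poly rat} := 'X^5 - 'X^4 + 'X^3 + 2%:R * 'X^2 - 1.
Definition cT1 : {poly rat} := 'X^3 - 'X^2 + 1.
Definition cT0 : {poly rat} := 1.

Definition bcubic (c3 c2 c1 c0 : {poly {poly rat}}) (F : bser) : bser :=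
  badd (bmul (bpoly c3) (bmul F (bmul F F)))
   (badd (bmul (bpoly c2) (bmul F F))
    (badd (bmul (bpoly c1) F) (bpoly c0))).
Definition ucubic (c3 c2 c1 c0 : {poly rat}) (F : user) : user :=
  uadd (umul (upoly c3) (umul F (umul F F)))
   (uadd (umul (upoly c2) (umul F F))
    (uadd (umul (upoly c1) F) (upoly c0))).

(* F is algebraic of degree 3 over Q(x,y) with the given cubic as relation:
   the (nonzero) cubic annihilates F, and no nonzero polynomial of degree <= 2
   (coefficients in Q[x,y], equivalently Q(x,y) after clearing denominators)
   annihilates F. *)
Definition balg_deg3_with (c3 c2 c1 c0 : {poly {poly rat}}) (F : bser) : Prop :=
  c3 != 0 /\ bcubic c3 c2 c1 c0 F = bzero /\
  forall a2 a1 a0 : {poly {poly rat}},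
    badd (bmul (bpoly a2) (bmul F F)) (badd (bmul (bpoly a1) F) (bpoly a0)) = bzero ->
    [/\ a2 = 0, a1 = 0 & a0 = 0].
Definition ualg_deg3_with (c3 c2 c1 c0 : {poly rat}) (F : user) : Prop :=
  c3 != 0 /\ ucubic c3 c2 c1 c0 F = uzero /\
  forall a2 a1 a0 : {poly rat},
    uadd (umul (upoly a2) (umul F F)) (uadd (umul (upoly a1) F) (upoly a0)) = uzero ->
    [/\ a2 = 0, a1 = 0 & a0 = 0].

From HB Require Import structures.
From mathcomp Require Import all_boot all_order all_algebra.
From mathcomp Require Import boolp zify ring.
Set Implicit Arguments. Unset Strict Implicit. Unset Printing Implicit Defensive.
Import Order.TTheory GRing.Theory Num.Theory.
Local Open Scope ring_scope.

(* Γ is the free product Z/2 * Z/3: a word is trivial iff cancelling SS and UUU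
   reduces it to the empty word, because a nonempty alternating product of S and
   U^(±1) is ± U^a W S^b with W a nonnegative matrix, W ≠ 1 (ping-pong: S U and S U^2
   are, up to sign, the positive matrices [[1,1],[0,1]] and [[1,0],[1,1]]).
   Cutting a trivial word at the first moment the reduction of a prefix is empty
   gives equations for Q and for the series gS, gU, gU2 of words whose reduction
   first becomes empty at their end after starting from S, U, U^2:
     Q = 1 + x gU Q + y gS Q,  gS = x gU gS + y,  gU = x gU2 + y gS gU,  gU2 = x + y gS gU2,
   and eliminating gS, gU, gU2 gives the cubic; T(x) = Q(x, x).
   The cubic has no root in Q(x, y): specialising y := x and then x := 1 would
   give a rational root of 7 X^3 + 2 X^2 + X + 1, but 7 p^3 + 2 p^2 q + p q^2 + q^3
   is odd when p and q are coprime. *)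

(** * Rings of formal power series *)

Definition bopp (f : bser) : bser := fun n m => - f n m.

Lemma bserP (f g : bser) : (forall n m, f n m = g n m) -> f = g.
Proof. by move=> h; apply/funext => n; apply/funext => m; exact: h. Qed.

Lemma baddA : associative badd.
Proof. by move=> f g h; apply: bserP => n m; rewrite /badd addrA. Qed.
Lemma baddC : commutative badd.
Proof. by move=> f g; apply: bserP => n m; rewrite /badd addrC. Qed.
Lemma badd0 : left_id bzero badd.
Proof. by move=> f; apply: bserP => n m; rewrite /badd add0r. Qed.
Lemma baddN : left_inverse bzero bopp badd.
Proof. by move=> f; apply: bserP => n m; rewrite /badd addNr. Qed.

(* The coefficients of [bmul f g] of bidegree at most (n, m) only depend on those
   of [f] and [g]; comparing with the polynomial truncations [trunc2 n m] transfers
   the ring laws of {poly {poly rat}} (outer variable y) to series. *)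
Definition trunc2 (n m : nat) (f : bser) : {poly {poly rat}} :=
  \poly_(j < m.+1) \poly_(i < n.+1) f i j.

Definition agree (n m : nat) (A : {poly {poly rat}}) (f : bser) :=
  forall i j, (i <= n)%N -> (j <= m)%N -> (A`_j)`_i = f i j.

Lemma agree_trunc2 n m f : agree n m (trunc2 n m f) f.
Proof. by move=> i j hi hj; rewrite coef_poly ltnS hj coef_poly ltnS hi. Qed.

Lemma agree_bpoly n m p : agree n m p (bpoly p).
Proof. by []. Qed.

Arguments agree_trunc2 : clear implicits.
Arguments agree_bpoly : clear implicits.

Lemma agreeW n m n' m' A f : (n' <= n)%N -> (m' <= m)%N ->
  agree n m A f -> agree n' m' A f.
Proof. by move=> hn hm h i j hi hj; apply: h; [apply: leq_trans hn|apply: leq_trans hm]. Qed.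

Lemma bmul_agree n m A B f g : agree n m A f -> agree n m B g ->
  bmul f g n m = ((A * B)`_m)`_n.
Proof.
move=> hA hB; rewrite coefM coef_sum /bmul exchange_big /=.
apply: eq_bigr => j _; rewrite coefM; apply: eq_bigr => i _.
by rewrite hA ?hB ?leq_subr // -ltnS.
Qed.

Lemma agree_bmul n m A B f g : agree n m A f -> agree n m B g ->
  agree n m (A * B) (bmul f g).
Proof.
move=> hA hB i j hi hj.
by rewrite (bmul_agree (agreeW hi hj hA) (agreeW hi hj hB)).
Qed.

Lemma agree_badd n m A B f g : agree n m A f -> agree n m B g ->
  agree n m (A + B) (badd f g).
Proof. by move=> hA hB i j hi hj; rewrite !coefD hA ?hB. Qed.

Lemma bmulC : commutative bmul.
Proof.
move=> f g; apply: bserP => n m.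
by rewrite !(bmul_agree (agree_trunc2 n m _) (agree_trunc2 n m _)) mulrC.
Qed.

Lemma bmulA : associative bmul.
Proof.
move=> f g h; apply: bserP => n m; pose T := agree_trunc2 n m.
rewrite (bmul_agree (T f) (agree_bmul (T g) (T h))).
by rewrite (bmul_agree (agree_bmul (T f) (T g)) (T h)) mulrA.
Qed.

Lemma bmul1 : left_id (bpoly 1) bmul.
Proof.
move=> f; apply: bserP => n m.
by rewrite (bmul_agree (agree_bpoly n m 1) (agree_trunc2 n m f)) mul1r agree_trunc2.
Qed.

Lemma bmulDl : left_distributive bmul badd.
Proof.
move=> f g h; apply: bserP => n m; rewrite /badd; pose T := agree_trunc2 n m.
rewrite (bmul_agree (agree_badd (T f) (T g)) (T h)).
by rewrite (bmul_agree (T f) (T h)) (bmul_agree (T g) (T h)) mulrDl !coefD.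
Qed.

Lemma bpoly1_neq0 : bpoly 1 != bzero.
Proof. by apply/eqP => /(congr1 (fun f => f 0%N 0%N)) /eqP; rewrite /bpoly !coef1 oner_eq0. Qed.

HB.instance Definition _ := Choice.on bser.
HB.instance Definition _ := GRing.isZmodule.Build bser baddA baddC badd0 baddN.
HB.instance Definition _ :=
  GRing.Zmodule_isComNzRing.Build bser bmulA bmulC bmul1 bmulDl bpoly1_neq0.

Lemma bpoly_is_zmod_morphism : zmod_morphism bpoly.
Proof. by move=> p q; apply: bserP => n m; rewrite /bpoly coefB coefB. Qed.

Lemma bpoly_is_monoid_morphism : monoid_morphism bpoly.
Proof.
split=> // p q; apply: bserP => n m.
by rewrite [RHS](bmul_agree (agree_bpoly n m p) (agree_bpoly n m q)).
Qed.

HB.instance Definition _ := GRing.isZmodMorphism.Build _ _ bpoly bpoly_is_zmod_morphism.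
HB.instance Definition _ := GRing.isMonoidMorphism.Build _ _ bpoly bpoly_is_monoid_morphism.

Lemma bpoly_inj : injective bpoly.
Proof.
by move=> p q e; apply/polyP => m; apply/polyP => n; exact: (congr1 (fun f : bser => f n m) e).
Qed.

Lemma bcubicE c3 c2 c1 c0 F :
  bcubic c3 c2 c1 c0 F = bpoly c3 * F ^+ 3 + bpoly c2 * F ^+ 2 + bpoly c1 * F + bpoly c0.
Proof. by rewrite -!addrA. Qed.

Definition serX : bser := bpoly px.
Definition serY : bser := bpoly py.

Lemma coef_bnat (k : nat) n m : (k%:R : bser) n m = ((n == 0%N) && (m == 0%N))%:R *+ k.
Proof.
rewrite -(rmorph_nat bpoly) -[LHS]/(((k%:R : {poly {poly rat}})`_m)`_n) !coefMn coef1.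
by case: m => [|m] /=; rewrite ?coef1 ?andbT // coef0 andbF.
Qed.

Lemma coef_XY f g n m : (serX * f + serY * g) n m =
  (if n is n'.+1 then f n' m else 0) + (if m is m'.+1 then g n m' else 0).
Proof.
rewrite -[LHS]/(bmul serX f n m + bmul serY g n m).
rewrite (bmul_agree (agree_bpoly n m px) (agree_trunc2 n m f)).
rewrite (bmul_agree (agree_bpoly n m py) (agree_trunc2 n m g)) /px /py coefCM !coefXM.
by case: n => [|n]; case: m => [|m]; rewrite /= ?coef0 ?agree_trunc2.
Qed.

Lemma coef_Y f n m : (serY * f) n m.+1 = f n m.
Proof. by rewrite -[serY * f]add0r -(mulr0 serX) coef_XY; case: n => [|n]; rewrite add0r. Qed.

Lemma lreg_serY : GRing.lreg serY.
Proof. by move=> f g e; apply/funext => n; apply/funext => m; rewrite -coef_Y e coef_Y. Qed.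

(* [diag f] is the specialisation f(x, x); on truncations it evaluates the outer
   variable y at 'X. *)
Definition diag (f : bser) : user := fun n => \sum_(i < n.+1) f i (n - i)%N.

Lemma coef_hornerX (A : {poly {poly rat}}) n :
  (A.['X])`_n = \sum_(i < n.+1) (A`_(n - i))`_i.
Proof.
rewrite [RHS](reindex_inj rev_ord_inj) /=.
rewrite [RHS](eq_bigr (fun j : 'I_n.+1 => (A`_j)`_(n - j))) => [|j _]; last first.
  by rewrite subSS subKn // -ltnS.
rewrite (horner_coef_wide _ (leq_maxl (size A) n.+1)) coef_sum.
rewrite (big_ord_widen _ (fun j => (A`_j)`_(n - j)) (leq_maxr (size A) n.+1)).
by rewrite [RHS]big_mkcond; apply: eq_bigr => j _; rewrite coefMXn ltnS; case: leqP.
Qed.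

Lemma diag_agree n A f i : agree n n A f -> (i <= n)%N -> diag f i = (A.['X])`_i.
Proof.
move=> hA hi; rewrite coef_hornerX; apply: eq_bigr => j _.
by rewrite hA // ?(leq_trans (leq_subr _ _) hi) // -ltnS (leq_trans (ltn_ord j)).
Qed.

Lemma diag_bpoly p : diag (bpoly p) = upoly (p.['X]).
Proof. by apply/funext => n; rewrite (diag_agree (agree_bpoly n n p)). Qed.

Lemma diagM f g : diag (f * g) = umul (diag f) (diag g).
Proof.
apply/funext => n; pose T := agree_trunc2 n n.
rewrite (diag_agree (agree_bmul (T f) (T g))) // hornerM coefM.
by apply: eq_bigr => i _; rewrite -!(diag_agree (T _)) ?leq_subr // -ltnS.
Qed.

Lemma diagD f g : diag (f + g) = uadd (diag f) (diag g).
Proof. by apply/funext => n; rewrite /diag /uadd -big_split. Qed.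

Lemma diag1 : diag 1 = upoly 1.
Proof. by rewrite diag_bpoly hornerC. Qed.

(* A section of [diag]: the ring laws of [user] are pulled back along [diag]. *)
Definition bser_of_user (u : user) : bser := fun n m => if m is 0 then u n else 0.

Lemma diag_bser_of_user u : diag (bser_of_user u) = u.
Proof.
apply/funext => n; rewrite /diag big_ord_recr /= subnn big1 ?add0r // => i _.
by rewrite /bser_of_user -subnSK.
Qed.

Definition uopp (f : user) : user := fun n => - f n.

Lemma uaddA : associative uadd.
Proof. by move=> f g h; apply/funext => n; rewrite /uadd addrA. Qed.
Lemma uaddC : commutative uadd.
Proof. by move=> f g; apply/funext => n; rewrite /uadd addrC. Qed.
Lemma uadd0 : left_id uzero uadd.
Proof. by move=> f; apply/funext => n; rewrite /uadd add0r. Qed.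
Lemma uaddN : left_inverse uzero uopp uadd.
Proof. by move=> f; apply/funext => n; rewrite /uadd addNr. Qed.

Lemma umulA : associative umul.
Proof.
move=> f g h; rewrite -[f]diag_bser_of_user -[g]diag_bser_of_user -[h]diag_bser_of_user.
by rewrite -!diagM mulrA.
Qed.

Lemma umulC : commutative umul.
Proof. by move=> f g; rewrite -[f]diag_bser_of_user -[g]diag_bser_of_user -!diagM mulrC. Qed.

Lemma umul1 : left_id (upoly 1) umul.
Proof. by move=> f; rewrite -diag1 -[f]diag_bser_of_user -diagM mul1r. Qed.

Lemma umulDl : left_distributive umul uadd.
Proof.
move=> f g h; rewrite -[f]diag_bser_of_user -[g]diag_bser_of_user -[h]diag_bser_of_user.
by rewrite -diagD -!diagM -diagD mulrDl.
Qed.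

Lemma upoly1_neq0 : upoly 1 != uzero.
Proof. by apply/eqP => /(congr1 (fun f => f 0%N)) /eqP; rewrite /upoly coef1 oner_eq0. Qed.

HB.instance Definition _ := Choice.on user.
HB.instance Definition _ := GRing.isZmodule.Build user uaddA uaddC uadd0 uaddN.
HB.instance Definition _ :=
  GRing.Zmodule_isComNzRing.Build user umulA umulC umul1 umulDl upoly1_neq0.

Lemma diag_is_zmod_morphism : zmod_morphism diag.
Proof.
by move=> f g; apply/funext => n; rewrite -[RHS]/(diag f n - diag g n) /diag -sumrB.
Qed.

Lemma diag_is_monoid_morphism : monoid_morphism diag.
Proof. by split=> [|f g]; [exact: diag1|exact: diagM]. Qed.

HB.instance Definition _ := GRing.isZmodMorphism.Build _ _ diag diag_is_zmod_morphism.
HB.instance Definition _ := GRing.isMonoidMorphism.Build _ _ diag diag_is_monoid_morphism.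

Lemma upolyE p : upoly p = diag (bpoly p%:P).
Proof. by rewrite diag_bpoly hornerC. Qed.

Lemma upoly_is_zmod_morphism : zmod_morphism upoly.
Proof. by move=> p q; rewrite !upolyE !rmorphB. Qed.

Lemma upoly_is_monoid_morphism : monoid_morphism upoly.
Proof. by split=> [|p q]; rewrite !upolyE ?rmorph1 // !rmorphM. Qed.

HB.instance Definition _ := GRing.isZmodMorphism.Build _ _ upoly upoly_is_zmod_morphism.
HB.instance Definition _ := GRing.isMonoidMorphism.Build _ _ upoly upoly_is_monoid_morphism.

Lemma upoly_inj : injective upoly.
Proof. by move=> p q e; apply/polyP => n; exact: (congr1 (fun f : user => f n) e). Qed.

Lemma ucubicE c3 c2 c1 c0 F :
  ucubic c3 c2 c1 c0 F = upoly c3 * F ^+ 3 + upoly c2 * F ^+ 2 + upoly c1 * F + upoly c0.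
Proof. by rewrite -!addrA. Qed.

(** * Cubics without roots in the fraction field *)

(* [cubic_form c3 c2 c1 p s] is s^3 C(p/s) for C(X) = c3 X^3 + c2 X^2 + c1 X + 1, so
   anisotropy of the form says that C has no root in the fraction field. *)
Definition cubic_form (R : comRingType) (c3 c2 c1 p s : R) :=
  c3 * p ^+ 3 + c2 * p ^+ 2 * s + c1 * p * s ^+ 2 + s ^+ 3.

Definition anisotropic (R : comRingType) (c3 c2 c1 : R) :=
  forall p s, (p != 0) || (s != 0) -> cubic_form c3 c2 c1 p s != 0.

Lemma anisotropic_lead_neq0 (R : comRingType) (c3 c2 c1 : R) :
  anisotropic c3 c2 c1 -> c3 != 0.
Proof.
move=> c_aniso; apply/eqP => c3_eq0.
have /eqP[] := c_aniso 1 0 (introT orP (or_introl (oner_neq0 R))).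
by rewrite /cubic_form c3_eq0; ring.
Qed.

Lemma rmorph_cubic_form (R S : comRingType) (f : {rmorphism R -> S}) (c3 c2 c1 p s : R) :
  f (cubic_form c3 c2 c1 p s) = cubic_form (f c3) (f c2) (f c1) (f p) (f s).
Proof. by rewrite /cubic_form !(rmorphD, rmorphM, rmorphXn). Qed.

Lemma cubic_form_homog (R : comRingType) (c3 c2 c1 k p s : R) :
  cubic_form c3 c2 c1 (k * p) (k * s) = k ^+ 3 * cubic_form c3 c2 c1 p s.
Proof. by rewrite /cubic_form; ring. Qed.

Lemma cubic_form_horner (R : comRingType) (c3 c2 c1 p s : {poly R}) z :
  (cubic_form c3 c2 c1 p s).[z] = cubic_form c3.[z] c2.[z] c1.[z] p.[z] s.[z].
Proof. by rewrite /cubic_form !hornerE. Qed.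

Section NoQuadraticRelation.
Variables (P : idomainType) (R : comRingType) (phi : {rmorphism P -> R}).
Hypothesis phi_inj : injective phi.
Variables (c3 c2 c1 : P) (F : R).
Hypothesis c_anisotropic : anisotropic c3 c2 c1.
Hypothesis F_root : phi c3 * F ^+ 3 + phi c2 * F ^+ 2 + phi c1 * F + 1 = 0.

Lemma no_linear_relation (p s : P) : phi s * F = phi p -> s = 0.
Proof.
move=> sF; apply/eqP/negPn/negP => s_neq0.
have /eqP[] := c_anisotropic (p := p) (s := s) (introT orP (or_intror s_neq0)).
apply: phi_inj; rewrite rmorph0.
have -> : phi (cubic_form c3 c2 c1 p s) =
    phi s ^+ 3 * (phi c3 * F ^+ 3 + phi c2 * F ^+ 2 + phi c1 * F + 1).
  by rewrite rmorph_cubic_form /cubic_form -sF; ring.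
by rewrite F_root mulr0.
Qed.

(* Dividing a2^2 C(X) by the quadratic A(X) leaves a remainder r1 X + r0 vanishing at F,
   hence zero; then A divides a2^2 C and its root -d / (c3 a2) is a root of C. *)
Lemma no_quadratic_relation (a2 a1 a0 : P) :
  phi a2 * F ^+ 2 + phi a1 * F + phi a0 = 0 -> [/\ a2 = 0, a1 = 0 & a0 = 0].
Proof.
move=> F_quad.
have a2_eq0 : a2 = 0.
  apply/eqP/negPn/negP => a2_neq0.
  pose d := c2 * a2 - c3 * a1.
  pose r1 := a2 ^+ 2 * c1 - c3 * a2 * a0 - d * a1.
  pose r0 := a2 ^+ 2 - d * a0.
  have rem : phi r1 * F + phi r0 = 0.
    have -> : phi r1 * F + phi r0 =
        phi a2 ^+ 2 * (phi c3 * F ^+ 3 + phi c2 * F ^+ 2 + phi c1 * F + 1)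
        - (phi c3 * phi a2 * F + phi d) * (phi a2 * F ^+ 2 + phi a1 * F + phi a0).
      by rewrite /r1 /r0 /d !(rmorphD, rmorphB, rmorphM, rmorphXn, rmorph1); ring.
    by rewrite F_root F_quad !mulr0 subrr.
  have r1_eq0 : r1 = 0.
    by apply: (no_linear_relation (p := - r0)); apply/eqP; rewrite rmorphN -subr_eq0 opprK rem.
  have r0_eq0 : r0 = 0 by apply: phi_inj; rewrite rmorph0 -rem r1_eq0 rmorph0 mul0r add0r.
  have cf_neq0 : cubic_form c3 c2 c1 (- d) (c3 * a2) != 0.
    by apply: c_anisotropic; rewrite mulf_neq0 ?orbT // (anisotropic_lead_neq0 c_anisotropic).
  have /eqP[] := mulf_neq0 (expf_neq0 2 a2_neq0) cf_neq0.
  transitivity ((c3 * a2) ^+ 2 * (r1 * (- d) + r0 * (c3 * a2))).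
    by rewrite /cubic_form /r1 /r0 /d; ring.
  by rewrite r1_eq0 r0_eq0; ring.
move: F_quad; rewrite a2_eq0 rmorph0 mul0r add0r => F_lin.
have a1_eq0 : a1 = 0.
  by apply: (no_linear_relation (p := - a0)); apply/eqP; rewrite rmorphN -subr_eq0 opprK F_lin.
by split=> //; apply: phi_inj; rewrite rmorph0 -F_lin a1_eq0 rmorph0 mul0r add0r.
Qed.

End NoQuadraticRelation.

Lemma size_mulXsubC (R : idomainType) (q : {poly R}) z :
  size (q * ('X - z%:P)) = (size q + (q != 0%R))%N.
Proof.
have [->|q_neq0] := eqVneq q 0; first by rewrite mul0r size_poly0.
by rewrite size_Mmonic ?monicXsubC // size_XsubC; lia.
Qed.

(* A nontrivial zero of the form can be divided by X - z until it does not vanish at z. *)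
Lemma anisotropic_horner (R : idomainType) (z : R) (c3 c2 c1 : {poly R}) :
  anisotropic c3.[z] c2.[z] c1.[z] -> anisotropic c3 c2 c1.
Proof.
move=> c_z_aniso p s; have [n] := ubnP (size p + size s).
elim: n p s => // n IH p s; rewrite ltnS => size_ps ps_neq0.
have [ps_z_neq0|] := boolP ((p.[z] != 0) || (s.[z] != 0)).
  by apply: contra_neq (c_z_aniso _ _ ps_z_neq0) => cf0; rewrite -cubic_form_horner cf0 horner0.
rewrite negb_or !negbK => /andP[/factor_theorem[p' def_p] /factor_theorem[s' def_s]].
have ps'_neq0 : (p' != 0) || (s' != 0).
  by move: ps_neq0; rewrite def_p def_s !mulf_eq0 -!negb_and; apply: contra => /andP[-> ->].
have -> : cubic_form c3 c2 c1 p s = ('X - z%:P) ^+ 3 * cubic_form c3 c2 c1 p' s'.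
  by rewrite def_p def_s /cubic_form; ring.
have size_lt : (size p' + size s' < size p + size s)%N.
  by rewrite def_p def_s !size_mulXsubC addnACA -{1}[(_ + _)%N]addn0 ltn_add2l addn_gt0 !lt0b.
by rewrite mulf_neq0 ?expf_neq0 ?polyXsubC_eq0 // IH // (leq_trans size_lt).
Qed.

Lemma F2_cubic (u v : 'F_2) : cubic_form 7 2 1 u v = 0 -> u = 0 /\ v = 0.
Proof. by case: u v => [[|[|//]] ?] [[|[|//]] ?]; split; apply/val_inj. Qed.

Lemma int_cubic_zero_even (p q : int) :
  cubic_form 7 2 1 p q = 0 -> (2 %| p)%Z && (2 %| q)%Z.
Proof.
move=> /(congr1 (intr : int -> 'F_2)); rewrite rmorph_cubic_form rmorph0 => /F2_cubic[p0 q0].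
by rewrite !(dvdz_pcharf (pchar_Fp (isT : prime 2))) p0 q0.
Qed.

Lemma rat_cubic_no_root (r : rat) : cubic_form 7 2 1 r 1 != 0.
Proof.
apply/eqP => cf0.
have : cubic_form 7 2 1 (numq r) (denq r) = 0.
  apply/eqP; rewrite -(intr_eq0 rat) rmorph_cubic_form /= numqE; apply/eqP.
  transitivity ((denq r)%:~R ^+ 3 * cubic_form 7 2 1 r 1); first by rewrite /cubic_form; ring.
  by rewrite cf0 mulr0.
move=> /int_cubic_zero_even /andP[two_num two_den].
have /eqP coprime_r : coprimez (numq r) (denq r) := coprime_num_den r.
by have := dvdz_gcd 2 (numq r) (denq r); rewrite coprime_r two_num two_den.
Qed.

Lemma anisotropic_721 : anisotropic (7 : rat) 2 1.
Proof.
move=> a b ab_neq0; have [b0|b_neq0] := eqVneq b 0.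
  have -> : cubic_form 7 2 1 a b = 7 * a ^+ 3 by rewrite b0 /cubic_form; ring.
  by move: ab_neq0; rewrite b0 eqxx orbF => a_neq0; rewrite mulf_neq0 ?expf_neq0.
have -> : cubic_form 7 2 1 a b = b ^+ 3 * cubic_form 7 2 1 (a / b) 1.
  by rewrite -cubic_form_homog mulr1 mulrC divfK.
by rewrite mulf_neq0 ?expf_neq0 //; exact: rat_cubic_no_root.
Qed.

(** * Reduced words in PSL_2(Z) *)

Lemma mx2M (a b c d a' b' c' d' : int) : mx2 a b c d *m mx2 a' b' c' d' =
  mx2 (a * a' + b * c') (a * b' + b * d') (c * a' + d * c') (c * b' + d * d').
Proof.
apply/matrixP => i j; rewrite !mxE !big_ord_recl big_ord0 !mxE addr0.
by case: i => [[|[|//]] ?]; case: j => [[|[|//]] ?].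
Qed.

Lemma mx2_1 : 1%:M = mx2 1 0 0 1.
Proof. by apply/matrixP => i j; rewrite !mxE; case: i => [[|[|//]] ?]; case: j => [[|[|//]] ?]. Qed.

Lemma mx2N (a b c d : int) : - mx2 a b c d = mx2 (- a) (- b) (- c) (- d).
Proof. by apply/matrixP => i j; rewrite !mxE; case: i => [[|[|//]] ?]; case: j => [[|[|//]] ?]. Qed.

Lemma mx2_inj (a b c d a' b' c' d' : int) :
  mx2 a b c d = mx2 a' b' c' d' -> [/\ a = a', b = b', c = c' & d = d'].
Proof.
move=> e; have entry i j := congr1 (fun M : 'M[int]_2 => M i j) e.
move: (entry ord0 ord0) (entry ord0 ord_max) (entry ord_max ord0) (entry ord_max ord_max).
by rewrite !mxE.
Qed.

Lemma matU3 : matU *m matU *m matU = - 1%:M.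
Proof. by rewrite !mx2M mx2_1 mx2N; congr mx2; ring. Qed.
Lemma matS2 : matS *m matS = - 1%:M.
Proof. by rewrite !mx2M mx2_1 mx2N; congr mx2; ring. Qed.
Lemma matSU : matS *m matU = - mx2 1 1 0 1.
Proof. by rewrite !mx2M mx2N; congr mx2; ring. Qed.
Lemma matSUU : matS *m (matU *m matU) = - mx2 1 0 1 1.
Proof. by rewrite !mx2M mx2N; congr mx2; ring. Qed.

Definition pm_eq (M N : 'M[int]_2) := (M == N) || (M == - N).

Lemma pm_eq_sym M N : pm_eq M N = pm_eq N M.
Proof. by rewrite /pm_eq [M == - N]eq_sym -eqr_oppLR eq_sym (eq_sym N). Qed.

Lemma pm_eq_trans M N K : pm_eq M N -> pm_eq N K -> pm_eq M K.
Proof. by move=> /orP[]/eqP-> /orP[]/eqP->; rewrite /pm_eq ?opprK eqxx ?orbT. Qed.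

Lemma pm_eq_mulr M N P : pm_eq M N -> pm_eq (M *m P) (N *m P).
Proof. by move=> /orP[]/eqP->; rewrite ?mulNmx /pm_eq eqxx ?orbT. Qed.

(* A reduced word is stored as the list of its syllables S, U, U^2, last syllable first;
   [push] appends a letter and cancels using S^2 = U^3 = 1. *)
Inductive syllable := SylS | SylU | SylU2.

Definition push (st : seq syllable) (b : bool) : seq syllable :=
  if b then match st with SylU :: r => SylU2 :: r | SylU2 :: r => r | _ => SylU :: st end
  else match st with SylS :: r => r | _ => SylS :: st end.

Definition syllable_mx (s : syllable) : 'M[int]_2 :=
  match s with SylS => matS | SylU => matU | SylU2 => matU *m matU end.

Fixpoint stack_mx (st : seq syllable) : 'M[int]_2 :=
  if st is s :: r then stack_mx r *m syllable_mx s else 1%:M.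

Lemma push_mx st b : pm_eq (stack_mx (push st b)) (stack_mx st *m letter_mx b).
Proof.
case: b; case: st => [|[] r] /=; rewrite /pm_eq ?eqxx //.
- by rewrite mulmxA eqxx.
- by rewrite -!mulmxA (mulmxA matU) matU3 mulmxN mulmx1 opprK eqxx orbT.
- by rewrite -mulmxA matS2 mulmxN mulmx1 opprK eqxx orbT.
Qed.

Lemma reduce_mx st w : pm_eq (stack_mx (foldl push st w)) (stack_mx st *m word_mx w).
Proof.
elim: w st => [|b w IH] st /=; first by rewrite mulmx1 /pm_eq eqxx.
by rewrite mulmxA; apply: pm_eq_trans (IH _) (pm_eq_mulr _ (push_mx _ _)).
Qed.

Definition is_S (s : syllable) := if s is SylS then true else false.
Definition alternating : rel syllable := fun s t => is_S s != is_S t.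

Lemma push_sorted st b : sorted alternating st -> sorted alternating (push st b).
Proof.
case: b; case: st => [|s r] //=; case: s => //=; case: r => [|s' r] //=;
  try (by case: s'); by move=> /andP[].
Qed.

Lemma reduce_sorted st w : sorted alternating st -> sorted alternating (foldl push st w).
Proof. by elim: w st => [|b w IH] st //= h; apply/IH/push_sorted. Qed.

Definition Upow (a : nat) : 'M[int]_2 :=
  match a with 0 => 1%:M | 1 => matU | _ => matU *m matU end.
Definition Spow (b : bool) : 'M[int]_2 := if b then matS else 1%:M.
Definition top_is_S (st : seq syllable) := if st is s :: _ then is_S s else false.

(* The ping-pong invariant: [st] evaluates to ± U^a W S^b with W nonnegative, with no
   zero column, and with entry sum at least 3 unless the U^a or the S^b is present. *)
Definition positive_form (st : seq syllable) : Prop :=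
  exists (a : nat) (w1 w2 w3 w4 : int),
    [/\ (a < 3)%N, [&& 0 <= w1, 0 <= w2, 0 <= w3 & 0 <= w4],
        (1 <= w1 + w3) && (1 <= w2 + w4),
        (2 + ((a == 0%N) && ~~ top_is_S st))%:Z <= w1 + w2 + w3 + w4 &
        pm_eq (stack_mx st) (Upow a *m mx2 w1 w2 w3 w4 *m Spow (top_is_S st))].

Lemma pm_eq_flip (B W N M W' : 'M[int]_2) :
  N = - M -> W *m M = W' -> pm_eq (B *m W *m N) (B *m W' *m 1%:M).
Proof. by move=> -> <-; rewrite mulmx1 -!mulmxA !mulmxN /pm_eq eqxx orbT. Qed.

Lemma sorted_positive_form s r : sorted alternating (s :: r) -> positive_form (s :: r).
Proof.
elim: r s => [|s' r IH] s /=.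
  by case: s; [exists 0%N|exists 1%N|exists 2%N]; exists 1, 0, 0, 1;
    split=> //=; rewrite -mx2_1 !mulmx1 ?mul1mx /pm_eq eqxx.
move=> /andP[alt_ss' sorted_r].
have [a [w1 [w2 [w3 [w4 [a_lt3 w_ge0 cols sum_ge pm_r]]]]]] := IH s' sorted_r.
have top_r : top_is_S (s' :: r) = ~~ is_S s.
  by move: alt_ss'; rewrite /alternating /=; case: (is_S s); case: (is_S s').
rewrite top_r in sum_ge pm_r; case: s {IH alt_ss' top_r} sum_ge pm_r => /= sum_ge pm_r.
- exists a, w1, w2, w3, w4; split; rewrite ?andbF //; first by lia.
  by rewrite /=; apply: (pm_eq_trans (pm_eq_mulr _ pm_r)); rewrite mulmx1 /pm_eq eqxx.
- exists a, w1, (w1 + w2), w3, (w3 + w4); split => //; try lia.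
  rewrite /=; apply: (pm_eq_trans (pm_eq_mulr _ pm_r)); rewrite -mulmxA.
  by apply: pm_eq_flip matSU _; rewrite mx2M; congr mx2; ring.
- exists a, (w1 + w2), w2, (w3 + w4), w4; split => //; try lia.
  rewrite /=; apply: (pm_eq_trans (pm_eq_mulr _ pm_r)); rewrite -mulmxA.
  by apply: pm_eq_flip matSUU _; rewrite mx2M; congr mx2; ring.
Qed.

Lemma positive_form_neq1 st : positive_form st -> ~~ pm_eq (stack_mx st) 1%:M.
Proof.
move=> [a [w1 [w2 [w3 [w4 [a_lt3 w_ge0 cols sum_ge pm_st]]]]]].
apply/negP => pm1; rewrite pm_eq_sym in pm_st.
have {pm_st pm1} := pm_eq_trans pm_st pm1; move: w_ge0 cols sum_ge.
case: (top_is_S st); case: a a_lt3 => [|[|[|//]]] _;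
  rewrite /Upow /Spow /pm_eq /matU /matS mx2_1 mx2N !mx2M;
  by move=> /and4P[? ? ? ?] /andP[? ?] ? /orP[] /eqP/mx2_inj[]; lia.
Qed.

Lemma trivial_wordE w : trivial_word w = nilp (foldl push [::] w).
Proof.
have := reduce_mx [::] w; rewrite /= mul1mx.
have := reduce_sorted w (isT : sorted alternating [::]).
case: (foldl push [::] w) => [|s r] /= sorted_st pm_st.
  by rewrite pm_eq_sym in pm_st; exact: pm_st.
apply/negbTE/negP => trivial_w.
have /negP[] := positive_form_neq1 (sorted_positive_form sorted_st).
exact: pm_eq_trans pm_st trivial_w.
Qed.

Arguments push : simpl never.

(** * Generating functions of words *)

Fixpoint words (k : nat) : seq (seq bool) :=
  if k is k'.+1 then [seq true :: w | w <- words k'] ++ [seq false :: w | w <- words k']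
  else [:: [::]].

Lemma mem_words k w : (w \in words k) = (size w == k).
Proof.
have cons_inj (b : bool) : injective (cons b) by move=> u v [].
elim: k w => [|k IH] [|b w] //=; rewrite mem_cat.
- by apply/norP; split; apply/mapP => -[].
- rewrite eqSS -IH; case: b; rewrite mem_map //.
    by case: mapP => [[]|]; rewrite ?orbF.
  by case: mapP => [[]|].
Qed.

Lemma uniq_words k : uniq (words k).
Proof.
elim: k => [|k IH] //=; rewrite cat_uniq !map_inj_uniq ?IH //; try by move=> u v [].
by rewrite andbT; apply/hasPn => w /mapP[v _ ->]; apply/mapP => -[].
Qed.

Lemma card_tuple_words k (P : pred (seq bool)) :
  #|[pred w : k.-tuple bool | P w]| = count P (words k).
Proof.
rewrite cardE /enum_mem size_filter -enumT -[LHS]/(count (preim val P) _) -count_map.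
apply/permP: P; apply: uniq_perm; first by rewrite map_inj_uniq ?enum_uniq //; exact: val_inj.
  exact: uniq_words.
move=> w; rewrite mem_words; apply/mapP/eqP => [[v _ ->]|size_w]; first exact: size_tuple.
by exists (Tuple (introT eqP size_w)); rewrite ?mem_enum.
Qed.

Lemma words_cons k P : count P (words k.+1) =
  (count (fun w => P (true :: w)) (words k) + count (fun w => P (false :: w)) (words k))%N.
Proof. by rewrite /= count_cat !count_map. Qed.

Lemma count_words_small k n (P : pred (seq bool)) : (k < n)%N ->
  count (fun w => (count id w == n) && P w) (words k) = 0%N.
Proof.
move=> k_lt_n; apply/eqP; rewrite -leqn0 leqNgt -has_count; apply/hasPn => w.
rewrite mem_words => /eqP size_w; have := count_size id w.
by rewrite size_w; case: eqP => // ->; rewrite leqNgt k_lt_n.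
Qed.

Lemma count_by_count_id n (P : pred (seq bool)) s : all (fun w => count id w <= n)%N s ->
  count P s = (\sum_(i < n.+1) count (fun w => (count id w == i) && P w) s)%N.
Proof.
elim: s => [|w s IH] /=; first by rewrite big1.
move=> /andP[w_le s_le]; rewrite big_split /= -IH //; congr (_ + _)%N.
rewrite (bigD1 (Ordinal (w_le : count id w < n.+1)%N)) //= eqxx big1 ?addn0 // => i /negPf ne_i.
by rewrite eq_sym -(inj_eq val_inj) /= in ne_i; rewrite ne_i.
Qed.

Definition word_gf (P : pred (seq bool)) : bser :=
  fun n m => (count (fun w => (count id w == n) && P w) (words (n + m)))%:R.

Lemma Qser_word_gf : Qser = word_gf trivial_word.
Proof.
apply/funext => n; apply/funext => m.
by rewrite /Qser /q (card_tuple_words _ (fun w => (count id w == n) && trivial_word w)).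
Qed.

Lemma Tser_diag : Tser = diag Qser.
Proof.
apply/funext => n; rewrite /Tser /t /diag /Qser /q (card_tuple_words _ trivial_word).
rewrite (count_by_count_id (n := n)) ?natr_sum; last first.
  by apply/allP => w; rewrite mem_words => /eqP <-; exact: count_size.
apply: eq_bigr => i _.
by rewrite (card_tuple_words _ (fun w => (count id w == i) && trivial_word w)) subnKC // -ltnS.
Qed.

Lemma word_gf_pred0 : word_gf pred0 = 0.
Proof.
apply/funext => n; apply/funext => m.
by rewrite /word_gf (eq_count (a2 := pred0)) ?count_pred0 // => w; rewrite andbF.
Qed.

Lemma word_gf_coef P n m :
  word_gf P n m = ((n == 0%N) && (m == 0%N) && P [::])%:R
    + (if n is n'.+1 then word_gf (fun w => P (true :: w)) n' m else 0)
    + (if m is m'.+1 then word_gf (fun w => P (false :: w)) n m' else 0).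
Proof.
rewrite /word_gf; case: n => [|n]; case: m => [|m].
- by rewrite /= !addr0 addn0.
- by rewrite add0n words_cons natrD count_pred0 !add0r.
- rewrite !addn0 words_cons natrD (count_words_small (fun w => P (false :: w)) (ltnSn n)).
  by rewrite /= !addr0 add0r.
- by rewrite [(n.+1 + m)%N]addSnnS [(n.+1 + m.+1)%N]addSn words_cons natrD add0r.
Qed.

Lemma word_gf_cons P : word_gf P = (P [::])%:R +
  (serX * word_gf (fun w => P (true :: w)) + serY * word_gf (fun w => P (false :: w))).
Proof.
apply/funext => n; apply/funext => m.
rewrite word_gf_coef -addrA -[RHS]/(_ n m + _ n m) coef_XY coef_bnat.
by case: (P [::]); rewrite ?andbT ?andbF.
Qed.

(* [clears false st w]: the word w reduces the stack st to the empty stack;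
   [clears true st w]: moreover the stack is nonempty before the last letter of w. *)
Fixpoint clears (strict : bool) (st : seq syllable) (w : seq bool) : bool :=
  if w is b :: w' then (~~ strict || ~~ nilp st) && clears strict (push st b) w'
  else nilp st.

Definition clear_gf strict st : bser := word_gf (clears strict st).

Lemma Qser_clear_gf : Qser = clear_gf false [::].
Proof.
rewrite Qser_word_gf /clear_gf; congr word_gf; apply/funext => w.
rewrite trivial_wordE; elim: w [::] => //= b w IH st; exact: IH.
Qed.

Lemma clear_gf_rec strict st : clear_gf strict st = (nilp st)%:R +
  (if ~~ strict || ~~ nilp st
   then serX * clear_gf strict (push st true) + serY * clear_gf strict (push st false)
   else 0).
Proof.
rewrite /clear_gf word_gf_cons /=.
by case: (~~ strict || ~~ nilp st); rewrite //= word_gf_pred0 !mulr0 addr0.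
Qed.

Lemma clear_gf_nil : clear_gf true [::] = 1.
Proof. by rewrite clear_gf_rec addr0. Qed.

Lemma push_cat s t r b : push (s :: t ++ r) b = push (s :: t) b ++ r.
Proof. by case: b; case: s. Qed.

(* A word clearing st ++ r splits uniquely at the first time st is cleared. *)
Lemma clear_gf_cat strict st r :
  clear_gf strict (st ++ r) = clear_gf true st * clear_gf strict r.
Proof.
apply/funext => n; apply/funext => m; have [k] := ubnP (n + m).
elim: k st n m => // k IH [|s t] n m nm_lt; first by rewrite clear_gf_nil mul1r.
rewrite cat_cons clear_gf_rec [clear_gf true _]clear_gf_rec /= orbT /=.
rewrite !push_cat !add0r mulrDl -!mulrA !coef_XY; congr (_ + _).
  by case: n nm_lt => // n nm_lt; apply: IH.
by case: m nm_lt => // m nm_lt; apply: IH; rewrite addnS in nm_lt.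
Qed.

Lemma Qser_system : exists gS gU gU2 : bser,
  [/\ Qser = 1 + serX * gU * Qser + serY * gS * Qser,
      gS = serX * gU * gS + serY,
      gU = serX * gU2 + serY * gS * gU
    & gU2 = serX + serY * gS * gU2].
Proof.
exists (clear_gf true [:: SylS]), (clear_gf true [:: SylU]), (clear_gf true [:: SylU2]).
split.
- rewrite {1}Qser_clear_gf clear_gf_rec /=.
  rewrite (_ : push [::] true = [:: SylU] ++ [::]) // (_ : push [::] false = [:: SylS] ++ [::]) //.
  by rewrite !clear_gf_cat -Qser_clear_gf; ring.
- rewrite {1}clear_gf_rec /= add0r (_ : push [:: SylS] true = [:: SylU] ++ [:: SylS]) //.
  by rewrite (_ : push [:: SylS] false = [::]) // clear_gf_cat clear_gf_nil; ring.
- rewrite {1}clear_gf_rec /= add0r (_ : push [:: SylU] true = [:: SylU2]) //.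
  by rewrite (_ : push [:: SylU] false = [:: SylS] ++ [:: SylU]) // clear_gf_cat; ring.
- rewrite {1}clear_gf_rec /= add0r (_ : push [:: SylU2] true = [::]) //.
  rewrite (_ : push [:: SylU2] false = [:: SylS] ++ [:: SylU2]) //.
  by rewrite clear_gf_cat clear_gf_nil; ring.
Qed.

(** * The cubic equations *)

Lemma cubic_elimination (R : comRingType) (x y Q a g1 g2 : R) :
  Q = 1 + x * g1 * Q + y * a * Q -> a = x * g1 * a + y ->
  g1 = x * g2 + y * a * g1 -> g2 = x + y * a * g2 ->
  Q ^+ 2 * y ^+ 2 *
  ((y ^+ 6 - x ^+ 6 + 6 * y ^+ 2 * x ^+ 3 - 3 * y ^+ 4 + 2 * x ^+ 3 + 3 * y ^+ 2 - 1) * Q ^+ 3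
   + (x ^+ 3 * y ^+ 2 - y ^+ 4 + x ^+ 3 + 2 * y ^+ 2 - 1) * Q ^+ 2
   + (x ^+ 3 - y ^+ 2 + 1) * Q + 1) = 0.
Proof.
move=> eQ ea eg1 eg2; set A := y * a.
have dQ : Q - (1 + x * g1 * Q + A * Q) = 0 by rewrite -eQ subrr.
have dA : A - (y ^+ 2 + x * g1 * A) = 0 by rewrite /A {1}ea; ring.
have dg1 : g1 - (x * g2 + A * g1) = 0 by rewrite -eg1 subrr.
have dg2 : g2 - (x + A * g2) = 0 by rewrite -eg2 subrr.
have g1_closed : x * g1 * (1 - A) ^+ 2 = x ^+ 3.
  apply/eqP; rewrite -subr_eq0; apply/eqP.
  transitivity (x * (1 - A) * (g1 - (x * g2 + A * g1)) + x ^+ 2 * (g2 - (x + A * g2))).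
    ring.
  by rewrite dg1 dg2; ring.
have A_cubic : (1 - A) ^+ 2 * (y ^+ 2 - A) + x ^+ 3 * A = 0.
  transitivity (- (A * (x * g1 * (1 - A) ^+ 2 - x ^+ 3)
                   + (1 - A) ^+ 2 * (A - (y ^+ 2 + x * g1 * A)))).
    ring.
  by rewrite g1_closed dA; ring.
have Q_A : Q * A ^+ 2 + A - Q * y ^+ 2 = 0.
  transitivity (Q * (A - (y ^+ 2 + x * g1 * A)) - A * (Q - (1 + x * g1 * Q + A * Q))).
    ring.
  by rewrite dA dQ; ring.
(* Eliminate A between A_cubic and Q_A: P, S and T are the resultant cofactors. *)
pose P := Q ^+ 2 * (x ^+ 3 - 1 - 3 * y ^+ 2) - Q * (2 + y ^+ 2) - 1.
pose S := Q * y ^+ 2 * (1 + 3 * Q + Q * y ^+ 2).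
pose T := 1 + 2 * Q - Q * A + y ^+ 2 * Q.
transitivity (P ^+ 2 * (Q * A ^+ 2 + A - Q * y ^+ 2)
  + (Q * (S - A * P) - P) * (Q ^+ 2 * ((1 - A) ^+ 2 * (y ^+ 2 - A) + x ^+ 3 * A)
                             - T * (Q * A ^+ 2 + A - Q * y ^+ 2))).
  by rewrite /P /S /T /A; ring.
by rewrite A_cubic Q_A; ring.
Qed.

Lemma lreg_fixpoint (R : comRingType) (Q c : R) : Q = 1 + c * Q -> GRing.lreg Q.
Proof.
move=> eQ; have Q_inv : (1 - c) * Q = 1 by rewrite mulrBl mul1r {1}eQ addrK.
by apply: (can_inj (g := fun f => (1 - c) * f)) => f; rewrite mulrA Q_inv mul1r.
Qed.

Lemma bpoly_cQ3 : bpoly cQ3 = serY ^+ 6 - serX ^+ 6 + 6 * serY ^+ 2 * serX ^+ 3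
  - 3 * serY ^+ 4 + 2 * serX ^+ 3 + 3 * serY ^+ 2 - 1.
Proof. by rewrite /cQ3 !(rmorphB, rmorphD, rmorphM, rmorphXn, rmorph_nat, rmorph1). Qed.
Lemma bpoly_cQ2 : bpoly cQ2 = serX ^+ 3 * serY ^+ 2 - serY ^+ 4 + serX ^+ 3 + 2 * serY ^+ 2 - 1.
Proof. by rewrite /cQ2 !(rmorphB, rmorphD, rmorphM, rmorphXn, rmorph_nat, rmorph1). Qed.
Lemma bpoly_cQ1 : bpoly cQ1 = serX ^+ 3 - serY ^+ 2 + 1.
Proof. by rewrite /cQ1 !(rmorphB, rmorphD, rmorphM, rmorphXn, rmorph_nat, rmorph1). Qed.

Lemma Qser_root : bpoly cQ3 * Qser ^+ 3 + bpoly cQ2 * Qser ^+ 2 + bpoly cQ1 * Qser + 1 = 0.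
Proof.
have [gS [gU [gU2 [eQ ea eg1 eg2]]]] := Qser_system.
have lreg_Q : GRing.lreg Qser.
  by apply: (lreg_fixpoint (c := serX * gU + serY * gS)); rewrite {1}eQ; ring.
rewrite bpoly_cQ3 bpoly_cQ2 bpoly_cQ1; apply/eqP.
move: (cubic_elimination eQ ea eg1 eg2) => /eqP.
by rewrite mulrI_eq0 //; exact: lregM (lregX lreg_Q) (lregX lreg_serY).
Qed.

Ltac horner_rmorph :=
  rewrite -horner_evalE !(rmorphB, rmorphD, rmorphM, rmorphXn, rmorph_nat, rmorph1) /=
          !horner_evalE.

Lemma cQ3_X : cQ3.['X] = cT3.
Proof. by rewrite /cQ3; horner_rmorph; rewrite /px /py hornerC hornerX /cT3; ring. Qed.
Lemma cQ2_X : cQ2.['X] = cT2.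
Proof. by rewrite /cQ2; horner_rmorph; rewrite /px /py hornerC hornerX /cT2; ring. Qed.
Lemma cQ1_X : cQ1.['X] = cT1.
Proof. by rewrite /cQ1; horner_rmorph; rewrite /px /py hornerC hornerX /cT1; ring. Qed.

Lemma cT3_1 : cT3.[1] = 7.
Proof. by rewrite /cT3; horner_rmorph; rewrite hornerX; ring. Qed.
Lemma cT2_1 : cT2.[1] = 2.
Proof. by rewrite /cT2; horner_rmorph; rewrite hornerX; ring. Qed.
Lemma cT1_1 : cT1.[1] = 1.
Proof. by rewrite /cT1; horner_rmorph; rewrite hornerX; ring. Qed.

Lemma Tser_root : upoly cT3 * Tser ^+ 3 + upoly cT2 * Tser ^+ 2 + upoly cT1 * Tser + 1 = 0.
Proof.
rewrite Tser_diag -cQ3_X -cQ2_X -cQ1_X -!diag_bpoly.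
by rewrite -!rmorphXn -!rmorphM -(rmorph1 diag) -!rmorphD Qser_root rmorph0.
Qed.

Lemma cT_anisotropic : anisotropic cT3 cT2 cT1.
Proof.
by apply: (anisotropic_horner (z := 1)); rewrite cT3_1 cT2_1 cT1_1; exact: anisotropic_721.
Qed.

Lemma cQ_anisotropic : anisotropic cQ3 cQ2 cQ1.
Proof.
by apply: (anisotropic_horner (z := 'X)); rewrite cQ3_X cQ2_X cQ1_X; exact: cT_anisotropic.
Qed.

Theorem mainTheorem1 :
  balg_deg3_with cQ3 cQ2 cQ1 cQ0 Qser /\ ualg_deg3_with cT3 cT2 cT1 cT0 Tser.
Proof.
split; split.
- exact: anisotropic_lead_neq0 cQ_anisotropic.
- split; first by rewrite bcubicE rmorph1 Qser_root.
  move=> a2 a1 a0 rel; apply: (no_quadratic_relation bpoly_inj cQ_anisotropic Qser_root).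
  by rewrite -addrA; exact: rel.
- exact: anisotropic_lead_neq0 cT_anisotropic.
- split; first by rewrite ucubicE rmorph1 Tser_root.
  move=> a2 a1 a0 rel; apply: (no_quadratic_relation upoly_inj cT_anisotropic Tser_root).
  by rewrite -addrA; exact: rel.
Qed.
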